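(* If $T\subseteq\mathbb{R}^n$ is an action set, then $\mathbf{W}(T)=\bigcap_{t\in T}\mathbf{W}(t)$ is a reaction set.
   Context: Single-commodity network pricing setting: $G=(\mathcal{V},\mathcal{A})$ directed graph, arc costs $c\ge0$, nonempty tolled arc set $\mathcal{A}_1\subsetneq\mathcal{A}$, $n=|\mathcal{A}_1|$, $N$ node–arc incidence matrix, single origin $o$ and destination $d$ connected by a path of arcs not in $\mathcal{A}_1$, $b_o=1$, $b_d=-1$, $b_i=0$ otherwise, $\mathcal{X}=\{x\in\mathbb{R}^{\mathcal{A}}: Nx=b,\ x\ge0\}$, $x_{\mathcal{A}_1}$ the restriction of $x$ to $\mathcal{A}_1$; tolls $t\in\mathbb{R}^n$ are extended by zeros to $\bar t\in\mathbb{R}^{\mathcal{A}}$. Let $f(t)=\min\{c^\top x+t^\top x_{\mathcal{A}_1}: x\in\mathcal{X}\}$ for $t\ge0$, $f(t)=-\infty$ otherwise, and $g(w)=\sup_{t\in\mathbb{R}^n}\{f(t)-t^\top w\}$. An action set is a set $T=\{t:(t,z)\in F\text{ for some }z\}$ where $F$ is a face of $\operatorname{epi}(-f)$ whose affine hull's direction space does not contain $(0,1)$ (non-vertical face); a reaction set is defined identically with $\operatorname{epi}(g)$ in place of $\operatorname{epi}(-f)$ (projection onto $w$-space of a non-vertical face of $\operatorname{epi}(g)$). For $t\ge0$, $\mathbf{W}(t)$ is the set of $w$ such that $(w,x)$ is optimal for some $x$ in the program $\min_{w,x}\{c^\top x+t^\top w: x_{\mathcal{A}_1}\le w,\ Nx=b,\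 w\ge0,\ x\ge0\}$. *)

From HB Require Import structures.
From mathcomp Require Import all_boot all_order all_algebra.
From mathcomp Require Import boolp classical_sets reals constructive_ereal ereal.
Set Implicit Arguments. Unset Strict Implicit. Unset Printing Implicit Defensive.
Import Order.TTheory GRing.Theory Num.Theory.
Local Open Scope ring_scope.
Local Open Scope classical_set_scope.

Section Geom.
Variables (R : realType) (m : nat).
Notation pt := ('cV[R]_m * R)%type.

Definition cvx_comb (l : R) (p q : pt) : pt :=
  (l *: p.1 + (1 - l) *: q.1, l * p.2 + (1 - l) * q.2).

Definition is_face (C F : set pt) : Prop :=
  [/\ F `<=` C,
      (forall p q l, F p -> F q -> 0 <= l <= 1 -> F (cvx_comb l p q)) &
      (forall p q l, C p -> C q -> 0 < l < 1 -> F (cvx_comb l p q) ->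
         F p /\ F q)].

(* the direction space of aff(F) = { sum lam_i p_i : p_i in F, sum lam_i = 0 };
   F is non-vertical iff (0,1) does not belong to it. *)
Definition nonvertical (F : set pt) : Prop :=
  ~ exists (k : nat) (p : 'I_k -> pt) (lam : 'I_k -> R),
      [/\ forall i, F (p i),
          \sum_i lam i = 0,
          \sum_i lam i *: (p i).1 = 0 &
          \sum_i lam i * (p i).2 = 1].

Definition proj_set (F : set pt) : set 'cV[R]_m := [set t | exists z, F (t, z)].

End Geom.

Section Pricing.
Variables (R : realType) (V A : finType) (tl hd : A -> V) (c : A -> R)
          (A1 : {set A}) (o d : V).

(* tolls / restricted flows live in R^n with n = #|A1|; coordinate i of
   R^n corresponds to the tolled arc enum_val i *)
Notation vec := 'cV[R]_#|A1|.

Definition incid (v : V) (a : A) : R := (tl a == v)%:R - (hd a == v)%:R.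
Definition bvec (v : V) : R := (v == o)%:R - (v == d)%:R.

Definition flowX : set (A -> R) :=
  [set x | (forall v, \sum_a incid v a * x a = bvec v) /\ (forall a, 0 <= x a)].

Definition restr (x : A -> R) : vec := \col_i x (enum_val i).

Definition dotv (t w : vec) : R := \sum_i t i 0 * w i 0.
Definition costc (x : A -> R) : R := \sum_a c a * x a.
Definition nonneg (t : vec) : Prop := forall i, 0 <= t i 0.

Definition fval (t : vec) : \bar R :=
  if `[< nonneg t >]
  then ereal_inf [set (costc x + dotv t (restr x))%:E | x in flowX]
  else -oo%E.

Definition gval (w : vec) : \bar R :=
  ereal_sup [set (fval t - (dotv t w)%:E)%E | t in [set: vec]].

Definition epi_negf : set (vec * R) := [set p | (- fval p.1 <= p.2%:E)%E].
Definition epi_g : set (vec * R) := [set p | (gval p.1 <= p.2%:E)%E].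

Definition action_set (T : set vec) : Prop :=
  exists F, [/\ is_face epi_negf F, F !=set0, nonvertical F & T = proj_set F].

Definition reaction_set (W : set vec) : Prop :=
  exists G, [/\ is_face epi_g G, G !=set0, nonvertical G & W = proj_set G].

Definition feasibleWX (w : vec) (x : A -> R) : Prop :=
  [/\ forall i, restr x i 0 <= w i 0, flowX x & nonneg w].
Definition objWX (t w : vec) (x : A -> R) : R := costc x + dotv t w.

Definition Wof (t : vec) : set vec :=
  [set w | exists x, feasibleWX w x /\
     (forall w' x', feasibleWX w' x' -> objWX t w x <= objWX t w' x')].

Definition WofSet (T : set vec) : set vec := [set w | forall t, T t -> Wof t w].

Definition untolled_rel : rel V :=
  fun u v => [exists a, [&& a \notin A1, tl a == u & hd a == v]].

End Pricing.

From HB Require Import structures.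
From mathcomp Require Import all_boot all_order all_algebra.
From mathcomp Require Import boolp classical_sets reals constructive_ereal ereal.
From mathcomp Require Import ring lra.
Set Implicit Arguments. Unset Strict Implicit. Unset Printing Implicit Defensive.
Import Order.TTheory GRing.Theory Num.Theory.
Local Open Scope ring_scope.

(* On an action set T the value function f is affine: T is the projection of a
   non-vertical face F of epi(-f), and f t = -z whenever (t, z) lies on F.
   Hence a flow that is optimal at the midpoint of two tolls of T is optimal at
   both.  Taking s in T whose optimal flows use as few arcs as possible, the
   midpoint of s and any t in T has the same optimal support as s, so an
   optimal flow x of s with maximal support is optimal at every t in T.  The
   set G of points (w, z) of epi g with z + t.w <= f t for all t in T is then
   an exposed face of epi g, non-vertical because z is determined by w on G,
   and it contains (x_A1, c.x).  Its projection is W(T) by LP duality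
   (Farkas' lemma, via Fourier-Motzkin elimination). *)

Lemma sum_indicator (R : nzSemiRingType) (I : finType) (i : I) (F : I -> R) :
  \sum_k (k == i)%:R * F k = F i.
Proof. by under eq_bigr do rewrite mulr_natl mulrb; rewrite -big_mkcond big_pred1_eq. Qed.

Section Farkas.
Variables (R : realFieldType) (J : finType).

Inductive row_cone (I : finType) (a : I -> J -> R) (b : I -> R) : (J -> R) -> R -> Prop :=
| row_cone_row i : row_cone a b (a i) (b i)
| row_cone0 : row_cone a b (fun=> 0) 0
| row_coneD al be al' be' : row_cone a b al be -> row_cone a b al' be' ->
    row_cone a b (fun j => al j + al' j) (be + be')
| row_coneZ l al be : 0 <= l -> row_cone a b al be ->
    row_cone a b (fun j => l * al j) (l * be).

Lemma row_coneP (I : finType) (a : I -> J -> R) b al be : row_cone a b al be ->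
  exists2 y : I -> R, forall i, 0 <= y i &
    (forall j, al j = \sum_i y i * a i j) /\ be = \sum_i y i * b i.
Proof.
elim=> {al be} [i||al be al' be' _ [y y0 [ya yb]] _ [y' y'0 [ya' yb']]
               |l al be l0 _ [y y0 [ya yb]]].
- exists (fun k => (k == i)%:R) => [k|]; first exact: ler0n.
  by split=> [j|]; rewrite sum_indicator.
- exists (fun=> 0) => //.
  by split=> [j|]; rewrite big1 // => i _; rewrite mul0r.
- exists (fun i => y i + y' i) => [i|]; first exact: addr_ge0.
  split=> [j|]; rewrite ?ya ?ya' ?yb ?yb' -big_split;
    by apply: eq_bigr => i _; rewrite mulrDl.
- exists (fun i => l * y i) => [i|]; first exact: mulr_ge0.
  split=> [j|]; rewrite ?ya ?yb mulr_sumr;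
    by apply: eq_bigr => i _; rewrite mulrA.
Qed.

Lemma seq_separation (L U : seq R) :
  (forall l u, l \in L -> u \in U -> l <= u) ->
  exists x, (forall l, l \in L -> l <= x) /\ (forall u, u \in U -> x <= u).
Proof.
elim: L => [_|l L IH LU].
  elim: U => [|u U [x [_ xU]]]; first by exists 0.
  exists (Num.min u x); split=> // v; rewrite inE => /orP[/eqP->|/xU vx].
    by rewrite ge_min lexx.
  by rewrite ge_min vx orbT.
have [l' u' l'L u'U|x [Lx xU]] := IH; first by apply: LU; rewrite // inE l'L orbT.
exists (Num.max l x); split=> [v|u uU]; last by rewrite ge_max xU // LU ?mem_head.
by rewrite inE => /orP[/eqP->|/Lx vx]; rewrite le_max ?lexx // vx orbT.
Qed.

Section Elimination.
Variables (I : finType) (a : I -> J -> R) (b : I -> R) (j0 : J).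

(* Fourier-Motzkin elimination of the variable j0: rows not involving j0 are
   kept, and every pair of rows with opposite signs at j0 is combined so as to
   cancel it. *)
Definition elim_row (k : I + I * I) : J -> R :=
  match k with
  | inl i => if a i j0 == 0 then a i else fun=> 0
  | inr (i, k) => if (0 < a i j0) && (a k j0 < 0)
                  then fun j => - a k j0 * a i j + a i j0 * a k j else fun=> 0
  end.

Definition elim_rhs (k : I + I * I) : R :=
  match k with
  | inl i => if a i j0 == 0 then b i else 0
  | inr (i, k) => if (0 < a i j0) && (a k j0 < 0)
                  then - a k j0 * b i + a i j0 * b k else 0
  end.

Lemma elim_cone al be : row_cone elim_row elim_rhs al be ->
  row_cone a b al be /\ al j0 = 0.
Proof.
elim=> {al be} [[i|[i k]]||al be al' be' _ [c1 e1] _ [c2 e2]|l al be l0 _ [c1 e1]].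
- rewrite /=; case: eqP => [ai0|_]; split=> //; exact: row_cone_row || exact: row_cone0.
- rewrite /=; case: ifP => [/andP[ai ak]|_]; split=> //; try exact: row_cone0.
    by apply: row_coneD; apply: row_coneZ; rewrite ?oppr_ge0 ?ltW //; exact: row_cone_row.
  by rewrite /= mulNr [a k j0 * _]mulrC addNr.
- by split=> //; exact: row_cone0.
- by split; [exact: row_coneD | rewrite e1 e2 addr0].
- by split; [exact: row_coneZ | rewrite e1 mulr0].
Qed.

Section Lift.
Variables (D : {set J}) (x' : J -> R).
Hypothesis x'_sol : forall k, \sum_(j in D :\ j0) elim_row k j * x' j <= elim_rhs k.

Let slack i := b i - \sum_(j in D :\ j0) a i j * x' j.

Let slack_elim i k : 0 < a i j0 -> a k j0 < 0 -> 0 <= - a k j0 * slack i + a i j0 * slack k.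
Proof.
move=> ai ak; have := x'_sol (inr (i, k)); rewrite /= ai ak /=.
under eq_bigr do rewrite mulrDl -!mulrA.
by rewrite big_split /= -!mulr_sumr /slack; lra.
Qed.

Let slack_bound i k : 0 < a i j0 -> a k j0 < 0 -> slack k / a k j0 <= slack i / a i j0.
Proof.
move=> ai ak; have := slack_elim ai ak.
rewrite -{1}(divfK (lt0r_neq0 ai) (slack i)) -{1}(divfK (ltr0_neq0 ak) (slack k)).
have -> : forall u l, - a k j0 * (u * a i j0) + a i j0 * (l * a k j0)
                      = (a i j0 * - a k j0) * (u - l) by move=> u l; ring.
by rewrite pmulr_rge0 ?subr_ge0 // mulr_gt0 // oppr_gt0.
Qed.

Lemma elim_lift : j0 \in D -> exists x, forall i, \sum_(j in D) a i j * x j <= b i.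
Proof.
move=> Dj0.
pose bounds P := [seq slack i / a i j0 | i <- enum I & P (a i j0)].
have [|x0 [lo hi]] := @seq_separation (bounds (< 0)) (bounds (> 0)).
  move=> l u /mapP[k]; rewrite mem_filter => /andP[ak _] -> /mapP[i].
  by rewrite mem_filter => /andP[ai _] ->; exact: slack_bound.
exists (fun j => if j == j0 then x0 else x' j) => i.
rewrite (big_setD1 j0) //= eqxx.
rewrite (eq_bigr (fun j => a i j * x' j)) => [|j]; last by rewrite !inE => /andP[/negbTE->].
have inb (P : pred R) : P (a i j0) -> slack i / a i j0 \in bounds P.
  by move=> Pi; apply: map_f; rewrite mem_filter Pi mem_enum.
rewrite -[b i](subrK (\sum_(j in D :\ j0) a i j * x' j)) lerD2r -/(slack i).
case: (ltgtP (a i j0) 0) => [an|ap|a0].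
- by rewrite mulrC -ler_ndivrMr // lo // inb.
- by rewrite mulrC -ler_pdivlMr // hi // inb.
- by have := x'_sol (inl i); rewrite /= a0 eqxx mul0r /slack subr_ge0.
Qed.

End Lift.
End Elimination.

Lemma fourier_motzkin (I : finType) (a : I -> J -> R) (b : I -> R) (D : {set J}) :
  (forall al be, row_cone a b al be -> (forall j, j \in D -> al j = 0) -> 0 <= be) ->
  exists x, forall i, \sum_(j in D) a i j * x j <= b i.
Proof.
move: {2}#|D| (erefl #|D|) => n; elim: n I a b D => [|n IH] I a b D cardD cone_ge0.
  exists (fun=> 0) => i; rewrite (cards0_eq cardD) big_set0.
  by apply: (cone_ge0 _ _ (row_cone_row a b i)) => j; rewrite (cards0_eq cardD) inE.
have [j0 Dj0] : exists j0, j0 \in D by apply/set0Pn; rewrite -card_gt0 cardD.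
have [||x' x'_sol] := IH _ (elim_row a j0) (elim_rhs a b j0) (D :\ j0).
- by move: cardD; rewrite (cardsD1 j0) Dj0 => -[].
- move=> al be /elim_cone[cone_al al_j0] al0; apply: cone_ge0 cone_al _ => j Dj.
  by case: (eqVneq j j0) => [->|ne] //; apply: al0; rewrite !inE ne.
- exact: elim_lift x'_sol Dj0.
Qed.

Lemma farkas (I : finType) (a : I -> J -> R) (b : I -> R) :
  ~ (exists x, forall i, \sum_j a i j * x j <= b i) ->
  exists y : I -> R, [/\ forall i, 0 <= y i,
    forall j, \sum_i y i * a i j = 0 & \sum_i y i * b i < 0].
Proof.
move=> infeasible; apply: contrapT => no_cert; apply: infeasible.
have [|x sol] := @fourier_motzkin I a b [set: J].
  move=> al be /row_coneP[y y0 [ya ->]] al0; rewrite leNgt; apply/negP => neg.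
  by apply: no_cert; exists y; split=> // j; rewrite -ya al0 ?inE.
by exists x => i; have := sol i; rewrite (eq_bigl _ _ (@finset.in_setT J)).
Qed.

End Farkas.

Lemma exists_scale_le (R : realFieldType) (I : finType) (x r : I -> R) :
  (forall i, 0 <= x i) -> (forall i, 0 <= r i) -> (forall i, r i = 0 -> x i = 0) ->
  exists2 e, 0 < e & forall i, e * x i <= r i.
Proof.
move=> x0 r0 supp; pose e := \big[Num.min/1]_(i | 0 < x i) (r i / x i).
have r_pos i : 0 < x i -> 0 < r i.
  by move=> xi; rewrite lt_neqAle r0 andbT eq_sym; apply/eqP => /supp ri; rewrite ri ltxx in xi.
exists e => [|i].
  apply: (big_ind (fun v => 0 < v)) => [|u v u0 v0|i xi]; first exact: ltr01.
    by rewrite lt_min u0 v0.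
  exact: divr_gt0 (r_pos _ xi) xi.
have [xi|] := ltP 0 (x i); last by rewrite le_eqVlt ltNge x0 orbF => /eqP->; rewrite mulr0.
by rewrite -ler_pdivlMr // /e (bigD1 i) //= ge_min lexx.
Qed.

Local Open Scope classical_set_scope.

Section FaceGeometry.
Variables (R : realType) (m : nat).
Notation pt := ('cV[R]_m * R)%type.

Definition is_convex (C : set pt) : Prop :=
  forall p q l, C p -> C q -> 0 <= l <= 1 -> C (cvx_comb l p q).

Lemma sum_ord2 (V : nmodType) (F : 'I_2 -> V) : \sum_i F i = F ord0 + F ord_max.
Proof. by rewrite !big_ord_recl big_ord0 addr0; congr (_ + F _); apply: val_inj. Qed.

Lemma nonvertical_face_min (C F : set pt) t z z' :
  is_face C F -> nonvertical F ->
  (forall t z z', C (t, z) -> z <= z' -> C (t, z')) ->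
  F (t, z) -> C (t, z') -> z <= z'.
Proof.
move=> [FC _ Fext] Fnv Cup Ftz Ctz'; rewrite leNgt; apply/negP => z'z.
(* (t, z) is the midpoint of (t, 2z - z') and (t, z'), so F contains a vertical segment. *)
have Ctop : C (t, 2 * z - z') by apply: Cup (FC _ Ftz) _; lra.
have [Ftop Fbot] : F (t, 2 * z - z') /\ F (t, z').
  apply: (Fext _ _ (1 / 2)) Ctop Ctz' _ _; first by apply/andP; lra.
  rewrite /cvx_comb /= -scalerDl; have -> : 1 / 2 + (1 - 1 / 2) = 1 :> R by ring.
  suff -> : 1 / 2 * (2 * z - z') + (1 - 1 / 2) * z' = z by rewrite scale1r.
  by field.
pose k := (2 * (z - z'))^-1.
apply: Fnv; exists 2, (fun i : 'I_2 => if i == ord0 then (t, 2 * z - z') else (t, z')),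
  (fun i : 'I_2 => if i == ord0 then k else - k).
split; rewrite ?sum_ord2 /=.
- by move=> i; case: ifP.
- by rewrite subrr.
- by rewrite scaleNr subrr.
- by rewrite /k; field; lra.
Qed.

Lemma exposed_face (C : set pt) (I : Type) (P : I -> Prop) (h : I -> pt -> R) :
  is_convex C ->
  (forall i l p q, h i (cvx_comb l p q) = l * h i p + (1 - l) * h i q) ->
  (forall i p, P i -> C p -> 0 <= h i p) ->
  is_face C [set p | C p /\ forall i, P i -> h i p <= 0].
Proof.
move=> Cconv h_affine h_ge0; split=> [p [] //|p q l [Cp hp] [Cq hq] l01|].
  split=> [|i Pi]; first exact: Cconv.
  rewrite h_affine; have /andP[l0 l1] := l01; have := hp i Pi; have := hq i Pi; nra.
move=> p q l Cp Cq /andP[l0 l1] [_ hpq].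
suff hle i : P i -> h i p <= 0 /\ h i q <= 0.
  by split; split=> // i Pi; have [] := hle i Pi.
move=> Pi; have := hpq i Pi; rewrite h_affine.
have := h_ge0 i p Pi Cp; have := h_ge0 i q Pi Cq; split; nra.
Qed.

End FaceGeometry.

Section Pricing.
Variables (R : realType) (V A : finType) (tl hd : A -> V) (c : A -> R)
          (A1 : {set A}) (o d : V).
Notation vec := 'cV[R]_#|A1|.
Notation X := (@flowX R V A tl hd o d).
Notation f := (@fval R V A tl hd c A1 o d).
Notation g := (@gval R V A tl hd c A1 o d).

Lemma dotvDl (s t w : vec) : dotv (s + t) w = dotv s w + dotv t w.
Proof. by rewrite /dotv -big_split; apply: eq_bigr => i _; rewrite mxE mulrDl. Qed.

Lemma dotvZl k (t w : vec) : dotv (k *: t) w = k * dotv t w.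
Proof. by rewrite /dotv mulr_sumr; apply: eq_bigr => i _; rewrite mxE mulrA. Qed.

Lemma dotvDr (t v w : vec) : dotv t (v + w) = dotv t v + dotv t w.
Proof. by rewrite /dotv -big_split; apply: eq_bigr => i _; rewrite mxE mulrDr. Qed.

Lemma dotvZr k (t w : vec) : dotv t (k *: w) = k * dotv t w.
Proof. by rewrite /dotv mulr_sumr; apply: eq_bigr => i _; rewrite mxE mulrCA. Qed.

Lemma dotv_sumr k (lam : 'I_k -> R) (p : 'I_k -> vec) (t : vec) :
  dotv t (\sum_i lam i *: p i) = \sum_i lam i * dotv t (p i).
Proof.
rewrite /dotv; under eq_bigr do rewrite summxE mulr_sumr.
rewrite exchange_big; apply: eq_bigr => j _; rewrite mulr_sumr.
by apply: eq_bigr => i _; rewrite mxE mulrCA.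
Qed.

Lemma dotv0r (t : vec) : dotv t 0 = 0.
Proof. by rewrite /dotv big1 // => i _; rewrite mxE mulr0. Qed.

Lemma dotv_delta i (w : vec) : dotv (delta_mx i 0) w = w i 0.
Proof.
rewrite -(sum_indicator i (fun j => w j 0)).
by apply: eq_bigr => j _; rewrite mxE eqxx andbT.
Qed.

Lemma dotv_le (t v w : vec) : nonneg t -> (forall i, v i 0 <= w i 0) -> dotv t v <= dotv t w.
Proof. by move=> t0 vw; apply: ler_sum => i _; apply: ler_wpM2l. Qed.

Lemma restrE (x : A -> R) i : restr A1 x i 0 = x (enum_val i).
Proof. exact: mxE. Qed.

Definition tolled_cost (x : A -> R) (t : vec) : R := costc c x + dotv t (restr A1 x).

Lemma tolled_cost_comb x y al be t :
  tolled_cost (fun a => al * x a + be * y a) t = al * tolled_cost x t + be * tolled_cost y t.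
Proof.
have restr_comb : restr A1 (fun a => al * x a + be * y a) = al *: restr A1 x + be *: restr A1 y.
  by apply/matrixP => i j; rewrite !mxE.
rewrite /tolled_cost restr_comb dotvDr !dotvZr /costc.
rewrite (eq_bigr (fun a => al * (c a * x a) + be * (c a * y a))) => [|a _]; last by ring.
by rewrite big_split -!mulr_sumr /=; ring.
Qed.

Lemma tolled_costDl x (s t : vec) : tolled_cost x (s + t) = tolled_cost x s + dotv t (restr A1 x).
Proof. by rewrite /tolled_cost dotvDl addrA. Qed.

Lemma tolled_cost_tolls_comb x l (s t : vec) :
  tolled_cost x (l *: s + (1 - l) *: t) = l * tolled_cost x s + (1 - l) * tolled_cost x t.
Proof. by rewrite /tolled_cost dotvDl !dotvZl; ring. Qed.

Lemma fval_le t x : nonneg t -> X x -> (f t <= (tolled_cost x t)%:E)%E.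
Proof. by move=> t0 Xx; rewrite /fval asboolT //; apply: ereal_inf_lbound; exists x. Qed.

Lemma fval_ge t r : nonneg t -> (forall x, X x -> r <= tolled_cost x t) -> (r%:E <= f t)%E.
Proof.
move=> t0 lb; rewrite /fval asboolT //; apply: le_ereal_inf_tmp => _ [x Xx <-].
by rewrite lee_fin lb.
Qed.

Lemma fval_Nnonneg t : ~ nonneg t -> f t = -oo%E.
Proof. by move=> t0; rewrite /fval asboolF. Qed.

Lemma gval_ge t w : (f t - (dotv t w)%:E <= g w)%E.
Proof. by apply: ereal_sup_ubound; exists t. Qed.

Lemma gval_le w z : (forall t, (f t - (dotv t w)%:E <= z)%E) -> (g w <= z)%E.
Proof. by move=> ub; apply: ge_ereal_sup => _ [t _ <-]. Qed.

Lemma flowX_comb x y al be : X x -> X y -> al + be = 1 ->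
  (forall a, 0 <= al * x a + be * y a) -> X (fun a => al * x a + be * y a).
Proof.
move=> [Nx _] [Ny _] albe ge0; split=> // v.
under eq_bigr do rewrite mulrDr mulrCA [_ * (be * _)]mulrCA.
by rewrite big_split -!mulr_sumr /= Nx Ny -mulrDl albe mul1r.
Qed.

Definition flow_row := ((((A + V) + V) + 'I_#|A1|) + 'I_1)%type.

Section FlowFarkas.
Variable cap : pred 'I_#|A1|.

(* The rows of the system -x <= 0, N x <= b, -N x <= -b, x_A1 <= u on the arcs
   selected by cap, and q.x <= z, evaluated at given values of x, N x, x_A1 and
   q.x. *)
Definition flow_form (xa : A -> R) (nv : V -> R) (w : vec) (obj : R) (k : flow_row) :
  R :=
  match k with
  | inl (inl (inl (inl a))) => - xa a
  | inl (inl (inl (inr v))) => nv v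
  | inl (inl (inr v)) => - nv v
  | inl (inr i) => if cap i then w i 0 else 0
  | inr _ => obj
  end.

Definition flow_lhs (q : A -> R) (k : flow_row) (a : A) : R :=
  flow_form (fun b => (b == a)%:R) (fun v => incid R tl hd v a)
            (restr A1 (fun b => (b == a)%:R)) (q a) k.

Lemma flow_lhs_mul q k x :
  \sum_a flow_lhs q k a * x a =
  flow_form x (fun v => \sum_a incid R tl hd v a * x a) (restr A1 x) (costc q x) k.
Proof.
case: k => [[[[a|v]|v]|i]|_] /=; rewrite ?restrE //.
- by rewrite -sum_indicator -sumrN; apply: eq_bigr => b _; rewrite mulNr eq_sym.
- by rewrite -sumrN; apply: eq_bigr => b _; rewrite mulNr.
- case: (cap i); last by rewrite big1 // => a _; rewrite mul0r.
  by rewrite -sum_indicator; apply: eq_bigr => b _; rewrite restrE eq_sym.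
Qed.

Definition cert_mu (y : flow_row -> R) (v : V) : R :=
  y (inl (inl (inl (inr v)))) - y (inl (inl (inr v))).

Definition cert_tolls (y : flow_row -> R) : vec :=
  \col_i (if cap i then y (inl (inr i)) else 0).

Lemma flow_form_comb y xa nv w obj :
  \sum_k y k * flow_form xa nv w obj k =
  - \sum_a y (inl (inl (inl (inl a)))) * xa a + \sum_v cert_mu y v * nv v
  + dotv (cert_tolls y) w + y (inr ord0) * obj.
Proof.
rewrite !big_sumType big_ord1 /=.
have -> : \sum_i y (inl (inr i)) * (if cap i then w i 0 else 0) = dotv (cert_tolls y) w.
  by apply: eq_bigr => i _; rewrite mxE; case: (cap i); rewrite ?mulr0 ?mul0r.
have -> : \sum_v cert_mu y v * nv v =
          \sum_v y (inl (inl (inl (inr v)))) * nv v + \sum_v y (inl (inl (inr v))) * - nv v.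
  by rewrite -big_split; apply: eq_bigr => v _ /=; rewrite /cert_mu; ring.
have -> : \sum_a y (inl (inl (inl (inl a)))) * - xa a
          = - \sum_a y (inl (inl (inl (inl a)))) * xa a.
  by rewrite -sumrN; apply: eq_bigr => a _; rewrite mulrN.
ring.
Qed.

Lemma flow_farkas (u : vec) (q : A -> R) (z : R) :
  ~ (exists x, [/\ X x, forall i, cap i -> restr A1 x i 0 <= u i 0 & costc q x <= z]) ->
  exists mu s lam, [/\ nonneg s, forall i, ~~ cap i -> s i 0 = 0, 0 <= lam,
    forall x, X x -> 0 <= \sum_v mu v * bvec R o d v + dotv s (restr A1 x) + lam * costc q x &
    \sum_v mu v * bvec R o d v + dotv s u + lam * z < 0].
Proof.
move=> infeasible.
have [|y [y0 y_lhs y_rhs]] :=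
  farkas (a := flow_lhs q) (b := flow_form (fun=> 0) (bvec R o d) u z).
  move=> [x sol]; apply: infeasible; exists x.
  have row k : flow_form x (fun v => \sum_a incid R tl hd v a * x a) (restr A1 x) (costc q x) k
               <= flow_form (fun=> 0) (bvec R o d) u z k by rewrite -flow_lhs_mul.
  split; [split=> [v|a] | move=> i capi | exact: row (inr ord0)].
  - have /= := row (inl (inl (inl (inr v)))); have /= := row (inl (inl (inr v))).
    by rewrite lerN2 => ge le; apply/eqP; rewrite eq_le le ge.
  - by have /= := row (inl (inl (inl (inl a)))); rewrite lerN2.
  - by have /= := row (inl (inr i)); rewrite capi.
exists (cert_mu y), (cert_tolls y), (y (inr ord0)); split=> //.
- by move=> i; rewrite mxE; case: (cap i).
- by move=> i /negbTE capi; rewrite mxE capi.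
- move=> x [Nx x0].
  have : \sum_k y k * flow_form x (fun v => \sum_a incid R tl hd v a * x a)
                                 (restr A1 x) (costc q x) k = 0.
    under eq_bigr do rewrite -flow_lhs_mul mulr_sumr.
    rewrite exchange_big big1 // => a _.
    by under eq_bigr do rewrite mulrA; rewrite -mulr_suml y_lhs mul0r.
  rewrite flow_form_comb (eq_bigr (fun v => cert_mu y v * bvec R o d v)) => [|v _]; last first.
    by rewrite Nx.
  have : 0 <= \sum_a y (inl (inl (inl (inl a)))) * x a by apply: sumr_ge0 => a _; apply: mulr_ge0.
  lra.
- move: y_rhs; rewrite flow_form_comb big1 => [|a _]; last by rewrite mulr0.
  by rewrite oppr0 add0r.
Qed.

End FlowFarkas.

Definition optimal (t : vec) (x : A -> R) : Prop :=
  X x /\ forall y, X y -> tolled_cost x t <= tolled_cost y t.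

Lemma fval_optimal t x : nonneg t -> optimal t x -> f t = (tolled_cost x t)%:E.
Proof. by move=> t0 [Xx opt]; apply/eqP; rewrite eq_le fval_le // fval_ge. Qed.

Lemma optimal_of_fval t x : nonneg t -> X x -> ((tolled_cost x t)%:E <= f t)%E -> optimal t x.
Proof. by move=> t0 Xx le; split=> // y Xy; rewrite -lee_fin (le_trans le) ?fval_le. Qed.

Lemma flowX_nonempty t phi : nonneg t -> f t = phi%:E -> exists x, X x.
Proof.
move=> t0 ft; apply: contrapT => noflow.
have : ((phi + 1)%:E <= f t)%E by apply: fval_ge => // x Xx; case: noflow; exists x.
by rewrite ft lee_fin; lra.
Qed.

Definition toll_arc (t : vec) (a : A) : R := \sum_i t i 0 * (enum_val i == a)%:R.

Lemma costc_toll_arc t x : costc (fun a => c a + toll_arc t a) x = tolled_cost x t.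
Proof.
rewrite /costc /tolled_cost /dotv; under eq_bigr do rewrite mulrDl.
rewrite big_split /=; congr (_ + _); under eq_bigr do rewrite mulr_suml.
rewrite exchange_big; apply: eq_bigr => i _ /=.
rewrite restrE -(sum_indicator (enum_val i) x) mulr_sumr.
by apply: eq_bigr => a _; rewrite eq_sym; ring.
Qed.

Lemma optimal_exists t phi : nonneg t -> f t = phi%:E -> exists x, optimal t x.
Proof.
move=> t0 ft; have [x0 Xx0] := flowX_nonempty t0 ft.
suff [x [Xx _ le]] : exists x, [/\ X x, forall i, pred0 i -> restr A1 x i 0 <= (0 : vec) i 0
                                   & costc (fun a => c a + toll_arc t a) x <= phi].
  by exists x; apply: optimal_of_fval; rewrite // ft lee_fin -costc_toll_arc.
apply: contrapT => /flow_farkas[mu [s [lam [_ s0 lam0 ge0 lt0]]]].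
have dotv_s w : dotv s w = 0 by rewrite /dotv big1 // => i _; rewrite s0 ?mul0r.
move: lt0; rewrite dotv_s addr0; set B := \sum_v _ => lt0.
have {}ge0 x : X x -> 0 <= B + lam * costc (fun a => c a + toll_arc t a) x.
  by move=> Xx; have := ge0 _ Xx; rewrite dotv_s addr0.
have [lam_pos|lam_le0] := ltrP 0 lam; last first.
  have lam_0 : lam = 0 by apply/eqP; rewrite eq_le lam_le0 lam0.
  by move: (ge0 _ Xx0) lt0; rewrite lam_0 !mul0r; lra.
have : ((- B / lam)%:E <= f t)%E.
  apply: fval_ge => // x Xx; rewrite ler_pdivrMr // mulrC -costc_toll_arc.
  by have := ge0 _ Xx; lra.
by rewrite ft lee_fin ler_pdivrMr // mulrC; lra.
Qed.

Lemma optimal_comb t x y l : 0 <= l <= 1 -> optimal t x -> optimal t y ->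
  optimal t (fun a => l * x a + (1 - l) * y a).
Proof.
move=> /andP[l0 l1] [Xx xopt] [Xy yopt].
have xy := xopt _ Xy; have yx := yopt _ Xx.
split=> [|z Xz]; last by rewrite tolled_cost_comb; have := xopt _ Xz; nra.
apply: flowX_comb => // [|a]; first by ring.
by case: Xx Xy => [_ x0] [_ y0]; rewrite addr_ge0 ?mulr_ge0 ?subr_ge0.
Qed.

Lemma optimal_of_support t r x : optimal t r -> X x -> (forall a, r a = 0 -> x a = 0) ->
  optimal t x.
Proof.
move=> [Xr ropt] Xx supp; split=> // y Xy.
have [r0 x0] : (forall a, 0 <= r a) /\ (forall a, 0 <= x a) by case: Xr; case: Xx.
have [e e0 ex] := exists_scale_le x0 r0 supp.
(* Since e x <= r, r can be pushed beyond itself away from x and stay a flow;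
   as r is optimal, this forces tolled_cost x t <= tolled_cost r t. *)
have Xpush : X (fun a => (1 + e) * r a + (- e) * x a).
  apply: flowX_comb => // [|a]; first by ring.
  by have := ex a; have := mulr_ge0 (ltW e0) (r0 a); nra.
have := ropt _ Xpush; rewrite tolled_cost_comb; have := ropt _ Xy; nra.
Qed.

Lemma optimal_max_support t phi : nonneg t -> f t = phi%:E ->
  exists2 r, optimal t r & forall x a, optimal t x -> 0 < x a -> 0 < r a.
Proof.
move=> t0 ft.
suff [r ropt rsupp] : exists2 r, optimal t r &
    forall a, a \in enum A -> forall x, optimal t x -> 0 < x a -> 0 < r a.
  by exists r => // x a; apply: rsupp; rewrite mem_enum.
elim: (enum A) => [|a s [r ropt rsupp]]; first by have [r] := optimal_exists t0 ft; exists r.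
have half : 0 <= (1 / 2 : R) <= 1 by apply/andP; split; lra.
have [[x [xopt xa]]|none] := pselect (exists x, optimal t x /\ 0 < x a); last first.
  exists r => // b; rewrite inE => /orP[/eqP-> y yopt ya|/rsupp]; last exact.
  by case: none; exists y.
exists (fun b => 1 / 2 * r b + (1 - 1 / 2) * x b); first exact: optimal_comb.
have [[[_ r0] _] [[_ x0] _]] := (ropt, xopt).
move=> b; rewrite inE => /orP[/eqP->|/rsupp bsupp] y yopt yb.
  by have := r0 a; lra.
by have := bsupp _ yopt yb; have := x0 b; lra.
Qed.

Lemma WofP t phi w : nonneg t -> f t = phi%:E ->
  Wof tl hd c o d t w <->
  exists x, [/\ X x, nonneg w, forall i, restr A1 x i 0 <= w i 0 & costc c x + dotv t w <= phi].
Proof.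
move=> t0 ft; split=> [[x [[xw Xx w0] opt]]|[x [Xx w0 xw le]]].
  exists x; split=> //; rewrite -lee_fin -ft; apply: fval_ge => // y Xy.
  by apply: opt; split=> // i; rewrite restrE ?lexx //; case: Xy.
exists x; split=> [|w' x' [x'w' Xx' w'0]]; first by split.
have := fval_le t0 Xx'; rewrite ft lee_fin /tolled_cost /objWX => le'.
by have := dotv_le t0 x'w'; lra.
Qed.

Lemma gval_le_costc (w : vec) x : X x -> (forall i, restr A1 x i 0 <= w i 0) ->
  (g w <= (costc c x)%:E)%E.
Proof.
move=> Xx xw; apply: gval_le => t.
have [t0|t0] := pselect (nonneg t); last by rewrite fval_Nnonneg //= leNye.
apply: le_trans (leeB (fval_le t0 Xx) (lexx (dotv t w)%:E)) _.
by rewrite -EFinB lee_fin /tolled_cost; have := dotv_le t0 xw; lra.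
Qed.

Lemma gval_fval_bound w z t phi : (g w <= z%:E)%E -> f t = phi%:E -> phi <= z + dotv t w.
Proof. by move=> gz ft; have := le_trans (gval_ge t w) gz; rewrite ft -EFinB lee_fin; lra. Qed.

Lemma nonneg_of_gval_tight t phi w z : nonneg t -> f t = phi%:E ->
  (g w <= z%:E)%E -> z + dotv t w <= phi -> nonneg w.
Proof.
move=> t0 ft gz tight i; pose e : vec := delta_mx i 0.
have te0 : nonneg (t + e) by move=> j; rewrite !mxE addr_ge0 ?ler0n.
have fe : (phi%:E <= f (t + e))%E.
  apply: fval_ge => // x Xx; rewrite tolled_costDl dotv_delta restrE.
  have := fval_le t0 Xx; rewrite ft lee_fin; case: Xx => _ x0; have := x0 (enum_val i); lra.
have := le_trans (leeB fe (lexx (dotv (t + e) w)%:E)) (le_trans (gval_ge (t + e) w) gz).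
by rewrite -EFinB lee_fin dotvDl dotv_delta; lra.
Qed.

Hypothesis c_ge0 : forall a, 0 <= c a.

Lemma costc_ge0 x : X x -> 0 <= costc c x.
Proof. by move=> [_ x0]; apply: sumr_ge0 => a _; apply: mulr_ge0. Qed.

Lemma Wof_of_gval_tight t phi w z : nonneg t -> f t = phi%:E ->
  (g w <= z%:E)%E -> z + dotv t w <= phi -> Wof tl hd c o d t w.
Proof.
move=> t0 ft gz tight; have w0 := nonneg_of_gval_tight t0 ft gz tight.
apply/(WofP _ t0 ft).
suff [x [Xx xw cz]] : exists x,
    [/\ X x, forall i, predT i -> restr A1 x i 0 <= w i 0 & costc c x <= z].
  by exists x; split=> //; [move=> i; exact: xw | lra].
apply: contrapT => /flow_farkas[mu [s [lam [s0 _ lam0 ge0 lt0]]]].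
set B := \sum_v _ in ge0 lt0.
(* The certificate yields the tolls s / k, whose value in the sup defining
   g w is at least (- B - s.w) / k; taking k slightly above lam exceeds z. *)
have bound k : 0 < k -> lam <= k -> - B - dotv s w <= k * z.
  move=> k0 lamk; have ks0 : nonneg (k^-1 *: s).
    by move=> i; rewrite mxE; apply: mulr_ge0; [rewrite invr_ge0 ltW | exact: s0].
  have fk : ((- B / k)%:E <= f (k^-1 *: s))%E.
    apply: fval_ge => // x Xx; rewrite /tolled_cost dotvZl ler_pdivrMr //.
    rewrite mulrDl mulrAC mulVf ?gt_eqF // mul1r.
    have : lam * costc c x <= k * costc c x by rewrite ler_wpM2r ?costc_ge0.
    by have := ge0 _ Xx; rewrite [costc c x * k]mulrC; lra.
  have := le_trans (leeB fk (lexx (dotv (k^-1 *: s) w)%:E)) (le_trans (gval_ge _ w) gz).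
  by rewrite -EFinB lee_fin dotvZl [k^-1 * _]mulrC -mulrBl ler_pdivrMr // mulrC.
pose D := - B - dotv s w.
have z1 : 0 < `|z| + 1 by have := normr_ge0 z; lra.
pose eps := (D - lam * z) / (`|z| + 1).
have eps0 : 0 < eps by rewrite divr_gt0 // subr_gt0 /D; lra.
have eps_def : eps * `|z| + eps = D - lam * z.
  by rewrite -[eps in _ + eps]mulr1 -mulrDr divfK ?gt_eqF.
have : D <= (lam + eps) * z by apply: bound; lra.
have : eps * z <= eps * `|z| by apply: ler_wpM2l; [exact: ltW | exact: ler_norm].
rewrite mulrDl; lra.
Qed.

Lemma nonvertical_of_graph (G : set (vec * R)) (t : vec) (b : R) :
  (forall p, G p -> p.2 = b - dotv t p.1) -> nonvertical G.
Proof.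
move=> graph [k [p [lam [Gp sum0 sum1]]]].
under eq_bigr => i _ do rewrite (graph _ (Gp i)) mulrBr.
rewrite sumrB -mulr_suml sum0 mul0r -dotv_sumr sum1 dotv0r subr0.
by move=> /esym/eqP; rewrite oner_eq0.
Qed.

Lemma epi_g_convex : is_convex (@epi_g R V A tl hd c A1 o d).
Proof.
move=> [p1 p2] [q1 q2] l /= gp gq /andP[l0 l1]; rewrite /epi_g /=.
apply: gval_le => t; rewrite dotvDr !dotvZr.
case ft: (f t) => [r| |] /=.
- have := gval_fval_bound gp ft; have := gval_fval_bound gq ft.
  by rewrite /= -EFinB lee_fin; nra.
- by have := le_trans (gval_ge t p1) gp; rewrite ft.
- by rewrite leNye.
Qed.

Section Face.
Variable F : set (vec * R).
Hypotheses (F_face : is_face (epi_negf tl hd c o d) F) (F_nv : nonvertical F).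

Lemma face_fval t z : F (t, z) -> nonneg t /\ f t = (- z)%:E.
Proof.
move=> Ftz; have [FC _ _] := F_face; have epi : (- f t <= z%:E)%E := FC _ Ftz.
have min z' : (- f t <= z'%:E)%E -> z <= z'.
  apply: (nonvertical_face_min F_face F_nv) Ftz => t' u u' /= Cu uu'.
  by apply: le_trans Cu _; rewrite lee_fin.
have t0 : nonneg t by apply: contrapT => t0; move: epi; rewrite fval_Nnonneg.
split=> //; move: epi min; case: (f t) => [r| |] //= epi min.
- have := min (- r) (lexx _); rewrite lee_fin in epi => le.
  by congr _%:E; lra.
- by exfalso; have := min (z - 1) (leNye _); lra.
Qed.

Lemma face_optimal_comb p q l x : F p -> F q -> 0 < l < 1 ->
  optimal (cvx_comb l p q).1 x -> optimal p.1 x /\ optimal q.1 x.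
Proof.
case: p q => [s zs] [t zt] Fs Ft /andP[l0 l1] mopt; have [_ Fconv _] := F_face.
have Fm := Fconv _ _ l Fs Ft (introT andP (conj (ltW l0) (ltW l1))).
have [s0 fs] := face_fval Fs; have [t0 ft] := face_fval Ft; have [m0 fm] := face_fval Fm.
have := fval_optimal m0 mopt; rewrite fm /= tolled_cost_tolls_comb => -[cm].
have [Xx _] := mopt.
have := fval_le s0 Xx; have := fval_le t0 Xx; rewrite fs ft !lee_fin => ct cs.
by split; apply: optimal_of_fval; rewrite // ?fs ?ft lee_fin; nra.
Qed.

Lemma common_optimal : F !=set0 -> exists x, forall t, proj_set F t -> optimal t x.
Proof.
move=> [[s0 z0] F0].
pose supp t : {set A} := [set a | `[< exists x, optimal t x /\ 0 < x a >]]%SET.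
pose has_supp n := `[< exists t z, F (t, z) /\ #|supp t| = n >].
have [|n /asboolP[s [zs [Fs cards]]] nmin] := ex_minnP (P := has_supp).
  by exists #|supp s0|; apply/asboolP; exists s0, z0.
have [s_nn fs] := face_fval Fs.
have [r ropt rmax] := optimal_max_support s_nn fs.
exists r => t [zt Ft].
have l01 : 0 < (1 / 2 : R) < 1 by apply/andP; split; lra.
have mopt_st x := face_optimal_comb (x := x) Fs Ft l01.
have [_ Fconv _] := F_face.
have Fm : F (cvx_comb (1 / 2) (s, zs) (t, zt)).
  by apply: Fconv Fs Ft _; apply/andP; split; lra.
pose m := (cvx_comb (1 / 2) (s, zs) (t, zt)).1.
have [m_nn fm] := face_fval Fm.
have supp_ms : supp m \subset supp s.
  apply/fintype.subsetP => a; rewrite !inE => -[x [xopt xa]].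
  by exists x; split=> //; have [] := mopt_st x xopt.
have supp_eq : supp m = supp s.
  apply/eqP; rewrite eqEcard supp_ms cards nmin //.
  by apply/asboolP; exists m, (cvx_comb (1 / 2) (s, zs) (t, zt)).2.
have [rm rmopt rmmax] := optimal_max_support m_nn fm.
suff : optimal m r by move=> /mopt_st[].
apply: optimal_of_support rmopt ropt.1 _ => a rma0; apply: contrapT => ra0.
have ra : 0 < r a by rewrite lt_neqAle eq_sym (ropt.1.2 a) andbT; apply/eqP.
have : a \in supp m by rewrite supp_eq inE; apply/asboolP; exists r.
by rewrite inE => /asboolP[x [xopt xa]]; have := rmmax _ _ xopt xa; rewrite rma0 ltxx.
Qed.

Lemma reaction_set_of_face : F !=set0 ->
  reaction_set tl hd c o d (WofSet tl hd c o d (proj_set F)).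
Proof.
move=> F0; have [[t0 z0] Ft0] := F0; have [t0_nn ft0] := face_fval Ft0.
pose h (q p : vec * R) := p.2 + dotv q.1 p.1 + q.2.
have h_ge0 q p : F q -> epi_g tl hd c o d p -> 0 <= h q p.
  case: q => t z Ftz gp; have [_ ft] := face_fval Ftz.
  by have := gval_fval_bound gp ft; rewrite /h /=; lra.
exists [set p | epi_g tl hd c o d p /\ forall q, F q -> h q p <= 0]; split.
- apply: exposed_face epi_g_convex _ h_ge0 => q l p p'.
  by rewrite /h /= dotvDr !dotvZr; ring.
- have [x xopt] := common_optimal F0.
  exists (restr A1 x, costc c x); split=> [|[t z] Ftz].
    by apply: gval_le_costc (xopt _ (ex_intro _ z0 Ft0)).1 _ => i; exact: lexx.
  have [t_nn ft] := face_fval Ftz.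
  have := fval_optimal t_nn (xopt t (ex_intro _ z Ftz)).
  by rewrite ft /h /tolled_cost /= => -[]; lra.
- apply: (nonvertical_of_graph (t := t0) (b := - z0)) => p [gp hp].
  by have := hp _ Ft0; have := h_ge0 _ _ Ft0 gp; rewrite /h /=; lra.
apply/seteqP; split=> w; last first.
  move=> [z [gz hz]] t [zt Ftz]; have [t_nn ft] := face_fval Ftz.
  by apply: Wof_of_gval_tight t_nn ft gz _; have := hz _ Ftz; rewrite /h /=; lra.
move=> WT; have [x0 [Xx0 _ x0w _]] := (WofP _ t0_nn ft0).1 (WT t0 (ex_intro _ z0 Ft0)).
have glo : ((- z0 - dotv t0 w)%:E <= g w)%E by rewrite EFinB -ft0; exact: gval_ge.
have gw : g w = (fine (g w))%:E by move: glo (gval_le_costc Xx0 x0w); case: (g w).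
exists (fine (g w)); split=> [|[t z] Ftz]; first by rewrite /epi_g /= -gw.
have [t_nn ft] := face_fval Ftz.
have [x [Xx _ xw le]] := (WofP _ t_nn ft).1 (WT t (ex_intro _ z Ftz)).
by have := gval_le_costc Xx xw; rewrite gw lee_fin /h /=; lra.
Qed.

End Face.

End Pricing.

Theorem proposition2 (R : realType) (V A : finType) (tl hd : A -> V)
    (c : A -> R) (A1 : {set A}) (o d : V) (T : set 'cV[R]_#|A1|) :
  (forall a, 0 <= c a) ->
  (0 < #|A1|)%N -> (#|A1| < #|A|)%N ->
  o != d ->
  connect (untolled_rel tl hd A1) o d ->
  action_set tl hd c o d T ->
  reaction_set tl hd c o d (WofSet tl hd c o d T).
Proof.
move=> c_ge0 _ _ _ _ [F [F_face F_ne F_nv ->]].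
exact: reaction_set_of_face.
Qed.
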